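(* Let $R$ be a $*$-ring with $2\in U(R)$. Then every $u\in R$ with $u^2=1$ satisfies $u^*=u$ if and only if every idempotent of $R$ is a projection.
   Context: A $*$-ring is a ring with identity with an involution $*$. A projection is $p$ with $p^2=p=p^*$. $U(R)$ is the unit group. *)

From HB Require Import structures.
From mathcomp Require Import all_boot all_algebra.
Set Implicit Arguments. Unset Strict Implicit. Unset Printing Implicit Defensive.
Import GRing.Theory.
Local Open Scope ring_scope.

Definition is_involution (R : pzRingType) (star : R -> R) : Prop :=
  [/\ forall x y : R, star (x + y) = star x + star y,
      forall x y : R, star (x * y) = star y * star x
    & forall x : R, star (star x) = x].

Definition idempotent_el (R : pzRingType) (e : R) : Prop := e * e = e.

Definition is_projection (R : pzRingType) (star : R -> R) (p : R) : Prop :=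
  p * p = p /\ p = star p.

Definition in_units (R : pzRingType) (x : R) : Prop :=
  exists y : R, x * y = 1 /\ y * x = 1.

From mathcomp Require Import all_boot all_algebra.
Set Implicit Arguments. Unset Strict Implicit. Unset Printing Implicit Defensive.
Local Open Scope ring_scope.
Import GRing.Theory.

(* Idempotents and square roots of 1 correspond via e |-> 1 - 2e and
   u |-> (1 + u)/2 once 2 is invertible; an involution fixes 1 and 1/2, so it
   fixes e exactly when it fixes 1 - 2e, and u exactly when it fixes (1 + u)/2. *)

Lemma idempotent_reflection (R : pzRingType) (e : R) :
  idempotent_el e -> (1 - e *+ 2) ^+ 2 = 1.
Proof.
move=> ee; rewrite expr2 mulrBl mul1r mulrBr mulr1 mulrnAl mulrnAr ee -mulrnA.
by rewrite (_ : e *+ (2 * 2) = e *+ 2 + e *+ 2) ?opprB ?addrK ?subrK // -mulrnDr.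
Qed.

Lemma sqr_addr1_involutive (R : pzRingType) (u : R) :
  u ^+ 2 = 1 -> (1 + u) * (1 + u) = (1 + u) *+ 2.
Proof.
by move=> uu; rewrite mulrDl !mulrDr !mul1r !mulr1 -expr2 uu mulr2n (addrC u 1).
Qed.

Section Involution.
Variables (R : pzRingType) (star : R -> R).
Hypothesis starD : forall x y : R, star (x + y) = star x + star y.
Hypothesis starM : forall x y : R, star (x * y) = star y * star x.
Hypothesis starK : forall x : R, star (star x) = x.

Lemma star0 : star 0 = 0.
Proof. by apply: (addrI (star 0)); rewrite -starD !addr0. Qed.

Lemma starN (x : R) : star (- x) = - star x.
Proof. by apply: (addrI (star x)); rewrite -starD !subrr star0. Qed.

Lemma starB (x z : R) : star (x - z) = star x - star z.
Proof. by rewrite starD starN. Qed.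

Lemma star1 : star 1 = 1.
Proof. by rewrite -[star 1]mulr1 -{2}(starK 1) -starM mulr1 starK. Qed.

Lemma starMn (x : R) (n : nat) : star (x *+ n) = star x *+ n.
Proof. by elim: n => [|n IHn]; rewrite ?mulr0n ?star0 // !mulrS starD IHn. Qed.

Lemma star_nat (n : nat) : star n%:R = n%:R.
Proof. by rewrite starMn star1. Qed.

Variable h : R.
Hypothesis mulr2h : 2%:R * h = 1.
Hypothesis mulrh2 : h * 2%:R = 1.

Lemma half_comm (x : R) : h * x = x * h.
Proof.
transitivity (h * (x * 2%:R) * h); first by rewrite -!mulrA mulr2h mulr1.
by rewrite mulr_natr -mulr_natl mulrA mulrh2 mul1r.
Qed.

Lemma mulr2n_inj : injective (fun x : R => x *+ 2).
Proof. by move=> a b /= ab; rewrite -[a]mul1r -[b]mul1r -mulrh2 -!mulrA !mulr_natl ab. Qed.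

Lemma star_half : star h = h.
Proof.
have starh2 : star h * 2%:R = 1 by rewrite -(star_nat 2) -starM mulr2h star1.
by rewrite -[star h]mulr1 -mulr2h mulrA starh2 mul1r.
Qed.

Lemma half_idempotent (u : R) : u ^+ 2 = 1 -> idempotent_el (h * (1 + u)).
Proof.
move=> uu; rewrite /idempotent_el mulrA -[h * (1 + u) * h]mulrA -half_comm.
by rewrite mulrA -mulrA sqr_addr1_involutive // -mulr_natl -mulrA (mulrA h 2%:R) mulrh2 mul1r.
Qed.

Lemma idempotent_projection_of_involutive_selfadjoint :
  (forall u : R, u ^+ 2 = 1 -> star u = u) ->
  forall e : R, idempotent_el e -> is_projection star e.
Proof.
move=> selfadj e ee; split => //.
have := selfadj _ (idempotent_reflection ee); rewrite starB star1 starMn => E.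
by apply: mulr2n_inj; apply: oppr_inj; apply: (addrI 1).
Qed.

Lemma involutive_selfadjoint_of_idempotent_projection :
  (forall e : R, idempotent_el e -> is_projection star e) ->
  forall u : R, u ^+ 2 = 1 -> star u = u.
Proof.
move=> proj u uu; have [_ E] := proj _ (half_idempotent uu).
move: E; rewrite starM star_half -half_comm starD star1 => E.
have E2 : 2%:R * (h * (1 + star u)) = 2%:R * (h * (1 + u)) by rewrite E.
by rewrite !mulrA mulr2h !mul1r in E2; apply: (addrI 1).
Qed.

End Involution.

Theorem lemma2p3 (R : pzRingType) (star : R -> R)
  (Hstar : is_involution star) (H2 : in_units (2%:R : R)) :
  (forall u : R, u ^+ 2 = 1 -> star u = u) <->
  (forall e : R, idempotent_el e -> is_projection star e).
Proof.
case: Hstar => starD starM starK; case: H2 => h [mulr2h mulrh2].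
split.
- exact: idempotent_projection_of_involutive_selfadjoint mulrh2.
- exact: involutive_selfadjoint_of_idempotent_projection mulr2h mulrh2.
Qed.
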